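(* Let $S$ be an inverse semigroup and $\mathcal M$ a quasi-generating set for $S$. Then $d_{\mathcal M\cup E(S)}=d_{\mathcal M}$, and for all $s,t\in S$, $$d_{\mathcal M}(s,t)=\begin{cases}\min\{k\ge 0\mid \exists\, m_1,\dots,m_k\in\mathcal M \text{ with } s=m_1\cdots m_k t\} & \text{if }(s,t)\in\mathcal L,\\ \infty & \text{if }(s,t)\notin\mathcal L\end{cases}$$ (with $k=0$ meaning $s=t$).
   Context: An inverse semigroup is a semigroup $S$ in which every $s$ has a unique $s^{-1}\in S$ with $ss^{-1}s=s$ and $s^{-1}ss^{-1}=s^{-1}$. $E(S)$ is the set of idempotents. Green's relation $\mathcal L$: $(s,t)\in\mathcal L$ iff $s^{-1}s=t^{-1}t$. A quasi-generating set is a subset $\mathcal G\subseteq S$ with $\mathcal G=\mathcal G^{-1}$ such that $S$ is generated as a semigroup by $\mathcal G\cup E(S)$. For a quasi-generating set $\mathcal G$, the Cayley metric $d_{\mathcal G}$ on $S$ is defined by $d_{\mathcal G}(s,t)=\infty$ if $(s,t)\notin\mathcal L$, and otherwise as the path distance from $s$ to $t$ in the graph whose vertices are the elements of the $\mathcal L$-class of $s$, with $u,v$ joined by an edge of length 1 whenever $gu=v$ for some $g\in\mathcal G$. *)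

From Stdlib Require Import List Classical ClassicalEpsilon.
Import ListNotations.
Set Implicit Arguments.

Section InvSemigroup.
Variables (T : Type) (mul : T -> T -> T) (inv : T -> T).

Definition is_inverse_semigroup : Prop :=
  (forall a b c, mul a (mul b c) = mul (mul a b) c) /\
  (forall s, mul (mul s (inv s)) s = s /\ mul (mul (inv s) s) (inv s) = inv s) /\
  (forall s x, mul (mul s x) s = s -> mul (mul x s) x = x -> x = inv s).

Definition idempotents (e : T) : Prop := mul e e = e.

Definition Lrel (s t : T) : Prop := mul (inv s) s = mul (inv t) t.

Inductive generated (A : T -> Prop) : T -> Prop :=
| gen_base : forall a, A a -> generated A a
| gen_mul : forall a b, generated A a -> generated A b -> generated A (mul a b).

Definition setU (A B : T -> Prop) (x : T) : Prop := A x \/ B x.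

Definition quasi_generating (G : T -> Prop) : Prop :=
  (forall x, G x <-> G (inv x)) /\
  (forall s, generated (setU G idempotents) s).

Definition cayley_adj (G : T -> Prop) (u v : T) : Prop :=
  Lrel u v /\ exists g, G g /\ (mul g u = v \/ mul g v = u).

Inductive walk (G : T -> Prop) : T -> T -> nat -> Prop :=
| walk_nil : forall u, walk G u u 0
| walk_cons : forall u w v n,
    cayley_adj G u w -> walk G w v n -> walk G u v (S n).

Definition is_graph_dist (G : T -> Prop) (s t : T) (d : option nat) : Prop :=
  match d with
  | None => forall n, ~ walk G s t n
  | Some n => walk G s t n /\ forall m, walk G s t m -> n <= m
  end.

(* Cayley metric d_G with values in option nat (None = infinity). *)
Definition cayley_dist (G : T -> Prop) (s t : T) : option nat :=
  epsilon (inhabits None)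
    (fun d => (~ Lrel s t /\ d = None) \/ (Lrel s t /\ is_graph_dist G s t d)).

Definition lprod (ms : list T) (t : T) : T := fold_right mul t ms.

End InvSemigroup.

(** Orient every Cayley edge as a left multiplication: if [g u] and [u] are
    L-related then [u = g^-1 (g u)], so as [M = M^-1] each edge of either
    graph is [u -- m u] with [m] in [M] or idempotent, and an idempotent edge
    is a loop because [e u] L [u] forces [e u = u].  Conversely, if
    [s = m_1 ... m_k t] and [s] L [t], then every suffix [m_i ... m_k t] is
    squeezed between [s] and [t] in the L-preorder, hence in the L-class of
    [t], so the factorisation is a walk.  Thus walks and M-factorisations have
    the same minimal length in both graphs, and a factorisation exists since
    [s = (s t^-1) t] with [s t^-1] a product of elements of [M] and [E(S)]. *)

From Stdlib Require Import List Classical ClassicalEpsilon Wf_nat Lia.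
Import ListNotations.

Section CayleyDistance.

Variables (T : Type) (mul : T -> T -> T) (inv : T -> T) (G : T -> Prop).

Definition cayley_dist_spec (s t : T) (d : option nat) : Prop :=
  (~ Lrel mul inv s t /\ d = None) \/
  (Lrel mul inv s t /\ is_graph_dist mul inv G s t d).

Lemma cayley_dist_spec_unique s t d d' :
  cayley_dist_spec s t d -> cayley_dist_spec s t d' -> d = d'.
Proof.
  intros [[HL ->] | [HL Hd]] [[HL' ->] | [HL' Hd']]; try contradiction.
  - reflexivity.
  - destruct d as [n |], d' as [m |]; simpl in *.
    + destruct Hd as [Wn Hn], Hd' as [Wm Hm].
      f_equal; specialize (Hn m Wm); specialize (Hm n Wn); lia.
    + destruct Hd as [Wn _]; exfalso; exact (Hd' n Wn).
    + destruct Hd' as [Wm _]; exfalso; exact (Hd m Wm).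
    + reflexivity.
Qed.

Lemma cayley_dist_eq s t d :
  cayley_dist_spec s t d -> cayley_dist mul inv G s t = d.
Proof.
  intro Hd; apply (cayley_dist_spec_unique s t); [| exact Hd].
  exact (epsilon_spec (inhabits None) (cayley_dist_spec s t) (ex_intro _ d Hd)).
Qed.

Lemma cayley_dist_None s t :
  ~ Lrel mul inv s t -> cayley_dist mul inv G s t = None.
Proof. intro HL; apply cayley_dist_eq; left; auto. Qed.

Lemma cayley_dist_Some s t k :
  Lrel mul inv s t -> walk mul inv G s t k ->
  (forall m, walk mul inv G s t m -> k <= m) ->
  cayley_dist mul inv G s t = Some k.
Proof. intros HL Wk Hk; apply cayley_dist_eq; right; simpl; auto. Qed.

End CayleyDistance.

Section InverseSemigroup.
Set Implicit Arguments.

Variables (T : Type) (mul : T -> T -> T) (inv : T -> T).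
Hypothesis HS : is_inverse_semigroup mul inv.

Local Infix "*" := mul.
Local Notation dom s := (inv s * s).

Lemma mulA a b c : a * (b * c) = a * b * c.
Proof. apply HS. Qed.

Lemma mul_inv_mul s : s * inv s * s = s.
Proof. apply (proj1 (proj2 HS) s). Qed.

Lemma inv_mul_inv s : inv s * s * inv s = inv s.
Proof. apply (proj1 (proj2 HS) s). Qed.

Lemma inv_unique s x : s * x * s = s -> x * s * x = x -> x = inv s.
Proof. apply HS. Qed.

Lemma mul_inv_mulK s z : s * (inv s * (s * z)) = s * z.
Proof. rewrite !mulA, mul_inv_mul; reflexivity. Qed.

Lemma inv_mul_invK s z : inv s * (s * (inv s * z)) = inv s * z.
Proof. rewrite !mulA, inv_mul_inv; reflexivity. Qed.

Ltac assoc := repeat rewrite <- mulA.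

Lemma invK s : inv (inv s) = s.
Proof. symmetry; apply inv_unique; [apply inv_mul_inv | apply mul_inv_mul]. Qed.

Lemma idempotent_inv e : idempotents mul e -> inv e = e.
Proof. intro He; symmetry; apply inv_unique; rewrite !He; reflexivity. Qed.

Lemma idempotent_mulK e z : idempotents mul e -> e * (e * z) = e * z.
Proof. intro He; rewrite mulA, He; reflexivity. Qed.

Lemma idempotent_dom s : idempotents mul (dom s).
Proof. unfold idempotents; rewrite mulA, inv_mul_inv; reflexivity. Qed.

Lemma idempotent_range s : idempotents mul (s * inv s).
Proof. unfold idempotents; rewrite mulA, mul_inv_mul; reflexivity. Qed.

(* [x := (e f)^-1] satisfies [f x e = x] by uniqueness of inverses, whence
   [x] is idempotent and so is [e f = x^-1 = x]. *)
Lemma idempotent_mul e f :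
  idempotents mul e -> idempotents mul f -> idempotents mul (e * f).
Proof.
  intros He Hf.
  set (x := inv (e * f)).
  assert (Hefx : e * (f * (x * (e * f))) = e * f).
  { pose proof (mul_inv_mul (e * f)) as H; fold x in H.
    rewrite <- !mulA in H; exact H. }
  assert (Hxef : forall z, x * (e * (f * (x * z))) = x * z).
  { intro z; pose proof (inv_mul_inv (e * f)) as H; fold x in H.
    rewrite <- H at 3; assoc; reflexivity. }
  assert (Hfxe : f * (x * e) = x).
  { apply inv_unique; assoc; rewrite ?idempotent_mulK by assumption.
    - exact Hefx.
    - rewrite Hxef; reflexivity. }
  assert (Hx : idempotents mul x).
  { unfold idempotents; rewrite <- Hfxe at 1 2; assoc; rewrite Hxef, Hfxe.
    reflexivity. }
  assert (Hefx' : e * f = x).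
  { rewrite <- (idempotent_inv Hx); apply eq_sym, invK. }
  rewrite Hefx'; exact Hx.
Qed.

Lemma idempotents_commute e f :
  idempotents mul e -> idempotents mul f -> e * f = f * e.
Proof.
  intros He Hf.
  rewrite <- (idempotent_inv (idempotent_mul He Hf)).
  symmetry; apply inv_unique; assoc; rewrite ?idempotent_mulK by assumption.
  - rewrite (mulA e f (e * f)); apply (idempotent_mul He Hf).
  - rewrite (mulA f e (f * e)); apply (idempotent_mul Hf He).
Qed.

Lemma idempotents_commute_l e f z :
  idempotents mul e -> idempotents mul f -> e * (f * z) = f * (e * z).
Proof. intros He Hf; rewrite !mulA, (idempotents_commute He Hf); reflexivity. Qed.

Lemma inv_mul a b : inv (a * b) = inv b * inv a.
Proof.
  symmetry; apply inv_unique; assoc.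
  - rewrite (mulA b (inv b)), (mulA (inv a) a),
      (idempotents_commute_l _ (idempotent_range b) (idempotent_dom a)).
    assoc; rewrite mul_inv_mulK, (mulA b), mul_inv_mul; reflexivity.
  - rewrite (mulA (inv a) a), (mulA b (inv b)),
      (idempotents_commute_l _ (idempotent_dom a) (idempotent_range b)).
    assoc; rewrite inv_mul_invK, (mulA (inv a)), inv_mul_inv; reflexivity.
Qed.

Lemma Lrel_sym s t : Lrel mul inv s t -> Lrel mul inv t s.
Proof. apply eq_sym. Qed.

Lemma Lrel_left_cancel g u w : u = g * w -> Lrel mul inv u w -> w = inv g * u.
Proof.
  unfold Lrel; intros Hu HL.
  transitivity (w * dom u).
  { rewrite HL, mulA, mul_inv_mul; reflexivity. }
  rewrite Hu at 1 2; rewrite inv_mul; assoc.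
  rewrite (mulA w (inv w)), (mulA (inv g) g),
    (idempotents_commute_l _ (idempotent_range w) (idempotent_dom g)).
  assoc; rewrite (mulA w (inv w) w), mul_inv_mul, <- Hu; reflexivity.
Qed.

Lemma idempotent_Lrel_fix e u :
  idempotents mul e -> Lrel mul inv (e * u) u -> e * u = u.
Proof.
  intros He HL.
  rewrite (Lrel_left_cancel eq_refl HL) at 2.
  rewrite (idempotent_inv He), mulA, He; reflexivity.
Qed.

(* Green's L-preorder [S a ⊆ S b], expressed on domain idempotents. *)
Definition Lle a b : Prop := dom a = dom a * dom b.

Lemma Lle_refl a : Lle a a.
Proof. symmetry; apply idempotent_dom. Qed.

Lemma Lle_mull x b : Lle (x * b) b.
Proof.
  unfold Lle; assoc; rewrite (mulA b (inv b) b), mul_inv_mul; reflexivity.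
Qed.

Lemma Lle_trans a b c : Lle a b -> Lle b c -> Lle a c.
Proof.
  unfold Lle; intros Hab Hbc.
  rewrite Hab at 1; rewrite Hbc, mulA, <- Hab; reflexivity.
Qed.

Lemma Lle_lprod ms t : Lle (lprod mul ms t) t.
Proof.
  induction ms as [|m ms IH]; simpl.
  - apply Lle_refl.
  - exact (Lle_trans (Lle_mull m _) IH).
Qed.

Lemma Lrel_between a b c :
  Lle a b -> Lle b c -> Lrel mul inv a c -> Lrel mul inv a b /\ Lrel mul inv b c.
Proof.
  unfold Lle, Lrel; intros Hab Hbc Hac.
  assert (Hbc' : dom b = dom c).
  { rewrite Hbc, (idempotents_commute (idempotent_dom b) (idempotent_dom c)).
    rewrite <- Hac at 1; rewrite <- Hab; exact Hac. }
  rewrite Hbc'; split; [exact Hac | reflexivity].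
Qed.

Lemma Lrel_lprod_cons m ms t :
  Lrel mul inv (m * lprod mul ms t) t ->
  Lrel mul inv (m * lprod mul ms t) (lprod mul ms t) /\
  Lrel mul inv (lprod mul ms t) t.
Proof. apply Lrel_between; [apply Lle_mull | apply Lle_lprod]. Qed.

Definition lprod_rep (M : T -> Prop) (s t : T) (k : nat) : Prop :=
  exists ms : list T, length ms = k /\ (forall m, In m ms -> M m) /\
                      s = lprod mul ms t.

Lemma lprod_rep_nil M t : lprod_rep M t t 0.
Proof. exists []; simpl; repeat split; intros m []. Qed.

Lemma lprod_rep_cons M m w t k :
  M m -> lprod_rep M w t k -> lprod_rep M (m * w) t (S k).
Proof.
  intros Hm [ms [Hlen [HmsM ->]]].
  exists (m :: ms); simpl; repeat split; [congruence |].
  intros x [<- | Hx]; auto.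
Qed.

Lemma walk_mono (G G' : T -> Prop) s t n :
  (forall x, G x -> G' x) -> walk mul inv G s t n -> walk mul inv G' s t n.
Proof.
  intros HGG' W; induction W as [u | u w v n [HL [g [Hg Hedge]]] W IH].
  - constructor.
  - apply walk_cons with w; [split; eauto | exact IH].
Qed.

Lemma walk_of_lprod_rep G s t n :
  lprod_rep G s t n -> Lrel mul inv s t -> walk mul inv G s t n.
Proof.
  intros [ms [<- [HmsG ->]]]; induction ms as [|m ms IH]; simpl; intro HL.
  - constructor.
  - destruct (Lrel_lprod_cons ms HL) as [Hstep Hrest].
    apply walk_cons with (lprod mul ms t).
    + split; [exact Hstep |].
      exists m; split; [apply HmsG; left | right]; reflexivity.
    + apply IH; [intros x Hx; apply HmsG; right |]; assumption.
Qed.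

Lemma cayley_adj_left_mul G u w :
  (forall x, G x -> G (inv x)) -> cayley_adj mul inv G u w ->
  exists g, G g /\ u = g * w.
Proof.
  intros G_inv [HL [g [Hg [Hgu | Hgw]]]].
  - exists (inv g); split; auto.
    exact (Lrel_left_cancel (eq_sym Hgu) (Lrel_sym HL)).
  - exists g; auto.
Qed.

Lemma lprod_rep_of_walk M s t n :
  (forall x, M x -> M (inv x)) ->
  walk mul inv (setU M (idempotents mul)) s t n ->
  exists j, j <= n /\ lprod_rep M s t j.
Proof.
  intros M_inv W.
  assert (ME_inv : forall x, setU M (idempotents mul) x ->
                             setU M (idempotents mul) (inv x)).
  { intros x [Hx | Hx]; [left; auto | right; rewrite idempotent_inv; auto]. }
  induction W as [u | u w v n Hadj W IH].
  - exists 0; split; [reflexivity | apply lprod_rep_nil].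
  - destruct IH as [j [Hj Hrep]].
    destruct (cayley_adj_left_mul ME_inv Hadj) as [g [[Hg | Hg] ->]].
    + exists (S j); split; [lia | apply lprod_rep_cons; auto].
    + rewrite (idempotent_Lrel_fix Hg (proj1 Hadj)).
      exists j; split; [lia | exact Hrep].
Qed.

Lemma generated_lprod (A : T -> Prop) x :
  generated mul A x ->
  exists gs, (forall g, In g gs -> A g) /\ forall y, x * y = lprod mul gs y.
Proof.
  intro Gx; induction Gx as [a Ha | a b _ [ga [HgaA Ea]] _ [gb [HgbA Eb]]].
  - exists [a]; split; [intros g [<- | []]; exact Ha | reflexivity].
  - exists (ga ++ gb); split.
    + intros g Hg; apply in_app_or in Hg as [Hg | Hg]; auto.
    + intro y; unfold lprod; rewrite fold_right_app.
      fold (lprod mul gb y) (lprod mul ga (lprod mul gb y)).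
      rewrite <- Eb, <- Ea, mulA; reflexivity.
Qed.

Section QuasiGenerating.

Variable M : T -> Prop.
Hypothesis HM : quasi_generating mul inv M.

Lemma quasi_generating_inv x : M x -> M (inv x).
Proof. apply HM. Qed.

Lemma lprod_rep_exists s t : Lrel mul inv s t -> exists n, lprod_rep M s t n.
Proof.
  intro HL.
  destruct (generated_lprod (proj2 HM (s * inv t))) as [gs [Hgs Egs]].
  assert (Hs : s = lprod mul gs t).
  { rewrite <- Egs, <- mulA, <- HL, mulA, mul_inv_mul; reflexivity. }
  assert (W : walk mul inv (setU M (idempotents mul)) s t (length gs)).
  { apply walk_of_lprod_rep; [exists gs; auto | exact HL]. }
  destruct (lprod_rep_of_walk quasi_generating_inv W) as [j [_ Hj]].
  exists j; exact Hj.
Qed.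

Lemma lprod_rep_least s t :
  Lrel mul inv s t ->
  exists k, lprod_rep M s t k /\ forall j, lprod_rep M s t j -> k <= j.
Proof.
  intro HL.
  destruct (dec_inh_nat_subset_has_unique_least_element
              (lprod_rep M s t) (fun n => classic _) (lprod_rep_exists HL))
    as [k [Hk _]].
  exists k; exact Hk.
Qed.

Lemma cayley_dist_lprod_rep (G : T -> Prop) s t k :
  (forall x, M x -> G x) -> (forall x, G x -> setU M (idempotents mul) x) ->
  Lrel mul inv s t -> lprod_rep M s t k ->
  (forall j, lprod_rep M s t j -> k <= j) ->
  cayley_dist mul inv G s t = Some k.
Proof.
  intros HMG HGME HL Hk Hmin; apply cayley_dist_Some; [exact HL | |].
  - apply (walk_mono G HMG).
    exact (walk_of_lprod_rep Hk HL).
  - intros m Wm.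
    destruct (lprod_rep_of_walk quasi_generating_inv
                (walk_mono _ HGME Wm)) as [j [Hjm Hj]].
    specialize (Hmin j Hj); lia.
Qed.

End QuasiGenerating.

End InverseSemigroup.

Theorem lemma1p15 (S : Type) (mul : S -> S -> S) (inv : S -> S)
  (HS : is_inverse_semigroup mul inv)
  (M : S -> Prop) (HM : quasi_generating mul inv M) :
  (forall s t, cayley_dist mul inv (setU M (idempotents mul)) s t
               = cayley_dist mul inv M s t) /\
  (forall s t,
     (Lrel mul inv s t ->
        exists k,
          cayley_dist mul inv M s t = Some k /\
          (exists ms : list S, length ms = k /\ (forall m, In m ms -> M m)
                               /\ s = lprod mul ms t) /\
          (forall j, (exists ms : list S, length ms = j /\ (forall m, In m ms -> M m)
                                          /\ s = lprod mul ms t) -> k <= j)) /\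
     (~ Lrel mul inv s t -> cayley_dist mul inv M s t = None)).
Proof.
  assert (M_sub : forall x, M x -> setU M (idempotents mul) x)
    by (intros x Hx; left; exact Hx).
  split.
  - intros s t; destruct (classic (Lrel mul inv s t)) as [HL | HL].
    + destruct (lprod_rep_least HS HM HL) as [k [Hk Hmin]].
      rewrite (cayley_dist_lprod_rep HS HM _ M_sub (fun _ Hx => Hx) HL Hk Hmin).
      rewrite (cayley_dist_lprod_rep HS HM M (fun _ Hx => Hx) M_sub HL Hk Hmin).
      reflexivity.
    + rewrite !cayley_dist_None by exact HL; reflexivity.
  - intros s t; split; [intro HL | apply cayley_dist_None].
    destruct (lprod_rep_least HS HM HL) as [k [Hk Hmin]].
    exists k; split; [| split; assumption].
    exact (cayley_dist_lprod_rep HS HM M (fun _ Hx => Hx) M_sub HL Hk Hmin).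
Qed.
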